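(* Let $G=(V,E)$ be a graph on $V=\{1,\ldots,n\}$ and $b(\mathbf x)=\sum_{ij\in E}a_{ij}x_ix_j$ with $a_{ij}>0$ for all $ij\in E$. Then $Q=\operatorname{conv}(B)$ if and only if $G$ is bipartite.
   Context: $B=\{(\mathbf x,z)\in[0,1]^n\times\mathbb R:z=b(\mathbf x)\}$ and $\operatorname{conv}(B)$ is its convex hull. The McCormick polytopes are $P=\{(\mathbf x,\mathbf y)\in[0,1]^n\times[0,1]^{|E|}: y_{ij}\le x_i,\ y_{ij}\le x_j,\ y_{ij}\ge x_i+x_j-1\ \forall ij\in E\}$ and $Q=\{(\mathbf x,z)\in[0,1]^n\times\mathbb R:\exists\mathbf y\in[0,1]^{|E|}\text{ with }(\mathbf x,\mathbf y)\in P,\ z=\sum_{ij\in E}a_{ij}y_{ij}\}$. *)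

From HB Require Import structures.
From mathcomp Require Import all_boot all_order all_algebra.
Set Implicit Arguments. Unset Strict Implicit. Unset Printing Implicit Defensive.
Import Order.TTheory GRing.Theory Num.Theory.
Local Open Scope ring_scope.

Definition point (R : realFieldType) (n : nat) := (('I_n -> R) * R)%type.

(* Simple graph on vertex set 'I_n (= {1,...,n}): symmetric irreflexive
   relation e.  Each undirected edge ij is counted once, as the pair (i,j)
   with i < j and e i j. *)
Definition simple_graph (n : nat) (e : rel 'I_n) : Prop :=
  (forall i j, e i j = e j i) /\ (forall i, ~~ e i i).

Definition bipartite (n : nat) (e : rel 'I_n) : Prop :=
  exists c : 'I_n -> bool, forall i j, e i j -> c i != c j.

Definition bilin (R : realFieldType) (n : nat) (e : rel 'I_n)
    (a : 'I_n -> 'I_n -> R) (x : 'I_n -> R) : R :=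
  \sum_(i < n) \sum_(j < n | (i < j)%N && e i j) a i j * x i * x j.

Definition in_box (R : realFieldType) (n : nat) (x : 'I_n -> R) : Prop :=
  forall i, 0 <= x i <= 1.

Definition Bset (R : realFieldType) (n : nat) (e : rel 'I_n)
    (a : 'I_n -> 'I_n -> R) (p : point R n) : Prop :=
  in_box p.1 /\ p.2 = bilin e a p.1.

Definition McCormickP (R : realFieldType) (n : nat) (e : rel 'I_n)
    (x : 'I_n -> R) (y : 'I_n -> 'I_n -> R) : Prop :=
  in_box x /\
  forall i j : 'I_n, (i < j)%N -> e i j ->
    [/\ 0 <= y i j <= 1, y i j <= x i, y i j <= x j & y i j >= x i + x j - 1].

Definition Qset (R : realFieldType) (n : nat) (e : rel 'I_n)
    (a : 'I_n -> 'I_n -> R) (p : point R n) : Prop :=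
  in_box p.1 /\
  exists y : 'I_n -> 'I_n -> R, McCormickP e p.1 y /\
    p.2 = \sum_(i < n) \sum_(j < n | (i < j)%N && e i j) a i j * y i j.

Definition conv (R : realFieldType) (n : nat) (S : point R n -> Prop)
    (p : point R n) : Prop :=
  exists (m : nat) (lam : 'I_m -> R) (pts : 'I_m -> point R n),
    [/\ forall k, 0 <= lam k,
        \sum_(k < m) lam k = 1,
        forall k, S (pts k),
        forall i, p.1 i = \sum_(k < m) lam k * (pts k).1 i
      & p.2 = \sum_(k < m) lam k * (pts k).2].

From HB Require Import structures.
From mathcomp Require Import all_boot all_order all_algebra.
From mathcomp Require Import ring lra.
Import Order.TTheory GRing.Theory Num.Theory.
Local Open Scope ring_scope.
Set Implicit Arguments. Unset Strict Implicit.

(* conv(B) is always contained in Q: averaging y_ij = x_i x_j over a convex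
   combination of points of B satisfies the McCormick inequalities.

   If s is a proper 2-colouring, every point of Q lies between the upper
   envelope z = sum a_ij min(x_i, x_j) and the lower envelope
   z = sum a_ij max(0, x_i + x_j - 1), and the graphs of both lie in conv(B).
   In the coordinates u = x for the upper envelope, and u_i = x_i or 1 - x_i
   according to the colour of i for the lower one, each envelope is a sum of terms built from min(u_i, u_j)
   that are affine along the decomposition u = c 1[u > 0] + (1 - c) w, where
   c is the least fractional coordinate of u.  As w has fewer fractional
   coordinates, induction writes the point as a convex combination of points
   over vertices of the cube, where the envelopes agree with b.

   Conversely (1/2, ..., 1/2, 0) lies in Q.  In a convex combination of points
   of B representing it, b vanishes at every point with positive weight, so
   there x_i x_j = 0 on every edge, while averaging forces x_i + x_j = 1;
   hence x_i = 0 is a proper 2-colouring. *)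

Section ConvexHull.
Variables (R : realFieldType) (n : nat) (S : point R n -> Prop).

Lemma conv_ext (p q : point R n) :
  conv S q -> (forall i, p.1 i = q.1 i) -> p.2 = q.2 -> conv S p.
Proof.
move=> [m [lam [pts [lam_ge0 lam1 ptsS xE zE]]]] pq1 pq2.
by exists m, lam, pts; split=> // [i|]; rewrite ?pq1 ?pq2.
Qed.

Lemma conv_point (p : point R n) : S p -> conv S p.
Proof.
move=> Sp; exists 1%N, (fun _ => 1), (fun _ => p).
by split=> [_||_|i|]; rewrite ?big_ord1 ?mul1r ?ler01.
Qed.

Lemma conv_mix (t : R) (p q r : point R n) :
  0 <= t <= 1 -> conv S p -> conv S q ->
  (forall i, r.1 i = t * p.1 i + (1 - t) * q.1 i) ->
  r.2 = t * p.2 + (1 - t) * q.2 ->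
  conv S r.
Proof.
move=> /andP[t0 t1] [m1 [l1 [p1 [A1 B1 C1 D1 E1]]]]
  [m2 [l2 [p2 [A2 B2 C2 D2 E2]]]] r1E r2E.
pose lam k := match split k with inl k1 => t * l1 k1 | inr k2 => (1 - t) * l2 k2 end.
pose pts k := match split k with inl k1 => p1 k1 | inr k2 => p2 k2 end.
have sum_split (F1 : 'I_m1 -> R) (F2 : 'I_m2 -> R) :
    \sum_(k < m1 + m2) (match split k with inl k1 => F1 k1 | inr k2 => F2 k2 end) =
    \sum_(k < m1) F1 k + \sum_(k < m2) F2 k.
  by rewrite big_split_ord; congr (_ + _); apply: eq_bigr => k _;
    rewrite ?(unsplitK (inl k)) ?(unsplitK (inr k)).
exists (m1 + m2)%N, lam, pts; split.
- by move=> k; rewrite /lam; case: split => k'; apply: mulr_ge0; rewrite ?subr_ge0.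
- by rewrite sum_split -!mulr_sumr B1 B2; ring.
- by move=> k; rewrite /pts; case: split.
- move=> i; rewrite (eq_bigr (fun k => match split k with
      inl k1 => t * (l1 k1 * (p1 k1).1 i) | inr k2 => (1 - t) * (l2 k2 * (p2 k2).1 i) end)).
    by rewrite sum_split -!mulr_sumr r1E D1 D2.
  by move=> k _; rewrite /lam /pts; case: split => k'; rewrite mulrA.
- rewrite (eq_bigr (fun k => match split k with
      inl k1 => t * (l1 k1 * (p1 k1).2) | inr k2 => (1 - t) * (l2 k2 * (p2 k2).2) end)).
    by rewrite sum_split -!mulr_sumr r2E E1 E2.
  by move=> k _; rewrite /lam /pts; case: split => k'; rewrite mulrA.
Qed.

Lemma conv_between (x : 'I_n -> R) (zl z zu : R) :
  conv S (x, zl) -> conv S (x, zu) -> zl <= z <= zu -> conv S (x, z).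
Proof.
move=> Sl Su /andP[lez zle]; have [ltlu|leul] := ltP zl zu; last first.
  by have -> : z = zl by lra.
have ul0 : zu - zl != 0 by rewrite subr_eq0 gt_eqF.
apply: (conv_mix (t := (z - zl) / (zu - zl)) _ Su Sl) => /= [|i|].
- by rewrite divr_ge0 ?ler_pdivrMr ?mul1r ?subr_gt0 //; lra.
- by ring.
- by field.
Qed.

End ConvexHull.

(* One coordinate of a decomposition u = c v + (1 - c) w in which v is the
   0/1 indicator of the support of u. *)
Definition split_at (R : realFieldType) (c u v w : R) : Prop :=
  (u = 0 /\ v = 0 /\ w = 0) \/ [/\ v = 1, 0 <= w <= 1 & u = c + (1 - c) * w].

Lemma split_at_affine (R : realFieldType) (c u v w : R) :
  split_at c u v w -> u = c * v + (1 - c) * w.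
Proof. by case=> [[-> [-> ->]]|[-> _ ->]]; ring. Qed.

Lemma split_at_min (R : realFieldType) (c ui vi wi uj vj wj : R) :
  0 < c < 1 -> split_at c ui vi wi -> split_at c uj vj wj ->
  Num.min ui uj = c * Num.min vi vj + (1 - c) * Num.min wi wj.
Proof.
move=> /andP[c0 c1] [[-> [-> ->]]|[-> /andP[wi0 wi1] ->]]
  [[-> [-> ->]]|[-> /andP[wj0 wj1] ->]]; rewrite !minEle;
  repeat case: ifP => ?; nra.
Qed.

Section Rounding.
Variables (R : realFieldType) (n : nat).

Definition cube_vertex (u : 'I_n -> R) : Prop := forall i, u i = 0 \/ u i = 1.

Definition frac_count (u : 'I_n -> R) : nat := #|[pred i | 0 < u i < 1]|.

Lemma frac_count0_vertex (u : 'I_n -> R) :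
  in_box u -> frac_count u = 0%N -> cube_vertex u.
Proof.
move=> u01 /card0_eq u_int i.
have /negbT := u_int i; rewrite inE negb_and -!leNgt.
by case/andP: (u01 i) => ? ? /orP[] ?; [left|right]; lra.
Qed.

Lemma split_box (u : 'I_n -> R) : in_box u -> (0 < frac_count u)%N ->
  exists c v w, [/\ 0 < c < 1, forall j, split_at c (u j) (v j) (w j)
                  & (frac_count w < frac_count u)%N].
Proof.
move=> u01 /card_gt0P[i0 frac_i0].
have [i1 /andP[c0 c1] c_min] := arg_minP u frac_i0.
set c := u _ in c0 c1 c_min.
have c_le j : 0 < u j -> c <= u j.
  move=> uj0; have [uj1|] := ltP (u j) 1; first by apply: c_min; apply/andP.
  by move=> ?; lra.
have c1_neq0 : 1 - c != 0 by rewrite subr_eq0 gt_eqF.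
pose w j := if 0 < u j then (u j - c) / (1 - c) else 0.
exists c, (fun j => if 0 < u j then 1 else 0), w; split=> [|j|]; first by rewrite c0 c1.
  rewrite /w; case: ifP => uj0; [right|left]; last first.
    by case/andP: (u01 j) => ? ?; split=> //; lra.
  have := c_le j uj0; case/andP: (u01 j) => ? ? ?.
  split=> //; last by field.
  by rewrite divr_ge0 ?ler_pdivrMr ?mul1r ?subr_ge0 ?subr_gt0 //; lra.
apply: proper_card; apply/properP; split.
  apply/subsetP => j; rewrite !inE /w; case: ifP => [uj0|]; last by rewrite ltxx.
  move=> /andP[_]; rewrite ltr_pdivrMr ?subr_gt0 // mul1r; lra.
exists i1; first by rewrite inE c0 c1.
by rewrite inE /w c0 subrr mul0r ltxx.
Qed.

Lemma conv_split_affine (S : point R n -> Prop) (g : ('I_n -> R) -> point R n) :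
  (forall v, cube_vertex v -> S (g v)) ->
  (forall c u v w, 0 < c < 1 -> (forall j, split_at c (u j) (v j) (w j)) ->
     (forall i, (g u).1 i = c * (g v).1 i + (1 - c) * (g w).1 i) /\
     (g u).2 = c * (g v).2 + (1 - c) * (g w).2) ->
  forall u, in_box u -> conv S (g u).
Proof.
move=> g_vertex g_split u; have [k] := ubnP (frac_count u).
elim: k u => // k IH u lt_uk u01.
have [u_vertex|frac_u] := posnP (frac_count u).
  by apply: conv_point; apply: g_vertex; apply: frac_count0_vertex.
have [c [v [w [c01 uvw lt_wu]]]] := split_box u01 frac_u.
have [v_vertex w01] : cube_vertex v /\ in_box w.
  by split=> j; case: (uvw j) => [[_ [vj wj]]|[vj wj _]];
    rewrite ?vj ?wj ?lexx ?ler01; auto.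
have [g1 g2] := g_split c u v w c01 uvw.
apply: conv_mix (conv_point (g_vertex v v_vertex)) (IH w _ w01) g1 g2.
  by case/andP: c01 => ? ?; apply/andP; split; lra.
exact: leq_trans lt_wu lt_uk.
Qed.

End Rounding.

Definition lit (R : realFieldType) (s : bool) (x : R) : R := if s then x else 1 - x.

Lemma litK (R : realFieldType) (s : bool) : involutive (@lit R s).
Proof. by case: s => x //=; rewrite /lit opprB addrC subrK. Qed.

(* In the coordinates x = lit s u this is min (x_i, x_j) when s_i = s_j and
   max (0, x_i + x_j - 1) otherwise, the two McCormick bounds on x_i x_j. *)
Definition env (R : realFieldType) (si sj : bool) (ui uj : R) : R :=
  match si, sj with
  | true, true => Num.min ui uj
  | true, false => ui - Num.min ui uj
  | false, true => uj - Num.min ui uj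
  | false, false => 1 - ui - uj + Num.min ui uj
  end.

Lemma env_bool (R : realFieldType) (si sj : bool) (ui uj : R) :
  ui = 0 \/ ui = 1 -> uj = 0 \/ uj = 1 -> env si sj ui uj = lit si ui * lit sj uj.
Proof.
by case=> ->; case=> ->; case: si; case: sj;
  rewrite /env /lit minEle ?ler01 ?lexx ?ler10; ring.
Qed.

Lemma env_split (R : realFieldType) (si sj : bool) (c ui vi wi uj vj wj : R) :
  0 < c < 1 -> split_at c ui vi wi -> split_at c uj vj wj ->
  env si sj ui uj = c * env si sj vi vj + (1 - c) * env si sj wi wj.
Proof.
move=> c01 si_split sj_split; have minE := split_at_min c01 si_split sj_split.
have uiE := split_at_affine si_split; have ujE := split_at_affine sj_split.
by case: si; case: sj; rewrite /env minE ?uiE ?ujE; ring.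
Qed.

Lemma env_le_mccormick_lower (R : realFieldType) (si sj : bool) (xi xj y : R) :
  si != sj -> 0 <= y -> xi + xj - 1 <= y -> env si sj (lit si xi) (lit sj xj) <= y.
Proof. by case: si; case: sj => // _ *; rewrite /env /lit minEle; case: ifP => ?; lra. Qed.

Lemma env_ge_mccormick_upper (R : realFieldType) (xi xj y : R) :
  y <= xi -> y <= xj -> y <= env true true xi xj.
Proof. by move=> yi yj; rewrite /env le_min yi yj. Qed.

Section Envelope.
Variables (R : realFieldType) (n : nat) (e : rel 'I_n) (a : 'I_n -> 'I_n -> R).

Definition env_sum (s : 'I_n -> bool) (u : 'I_n -> R) : R :=
  \sum_(i < n) \sum_(j < n | (i < j)%N && e i j) a i j * env (s i) (s j) (u i) (u j).

Lemma conv_Bset_env (s : 'I_n -> bool) (u : 'I_n -> R) :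
  in_box u -> conv (Bset e a) (fun i => lit (s i) (u i), env_sum s u).
Proof.
move: u; apply: (conv_split_affine (g := fun x => (fun i => lit (s i) (x i), env_sum s x))).
  move=> v v01; split=> [i|] /=.
    by rewrite /lit; case: (s i); case: (v01 i) => ->; apply/andP; split; lra.
  apply: eq_bigr => i _; apply: eq_bigr => j _.
  by rewrite env_bool ?mulrA.
move=> c u v w c01 uvw; split=> [i|] /=.
  by rewrite /lit (split_at_affine (uvw i)); case: (s i); ring.
rewrite /env_sum !mulr_sumr -big_split; apply: eq_bigr => i _.
rewrite !mulr_sumr -big_split; apply: eq_bigr => j _.
by rewrite (env_split _ _ c01 (uvw i) (uvw j)) /=; ring.
Qed.

End Envelope.

Lemma weighted_sum_eq0 (R : numDomainType) (m : nat) (lam F : 'I_m -> R) :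
  (forall k, 0 <= lam k) -> (forall k, lam k != 0 -> 0 <= F k) ->
  \sum_(k < m) lam k * F k = 0 -> forall k, lam k != 0 -> F k = 0.
Proof.
move=> lam_ge0 F_ge0 sum0 k lamk.
have term_ge0 l : true -> 0 <= lam l * F l.
  by have [->|lam_l] := eqVneq (lam l) 0; rewrite ?mul0r // mulr_ge0 ?F_ge0.
move/eqP: (@psumr_eq0P _ _ _ _ term_ge0 sum0 k isT).
by rewrite mulf_eq0 (negPf lamk) => /eqP.
Qed.

Lemma eq0_xor_of_mul0_add1 (R : idomainType) (s t : R) :
  s * t = 0 -> s + t = 1 -> (s == 0) != (t == 0).
Proof.
move=> /eqP; rewrite mulf_eq0 => /orP[] /eqP st0; rewrite st0 ?add0r ?addr0 => ->;
  by rewrite eqxx oner_eq0.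
Qed.

Lemma bipartite_of_ltn (n : nat) (e : rel 'I_n) (c : 'I_n -> bool) :
  simple_graph e -> (forall i j : 'I_n, (i < j)%N -> e i j -> c i != c j) ->
  bipartite e.
Proof.
move=> [e_sym e_irr] c_proper; exists c => i j eij.
case: (ltngtP i j) => [ij|ji|/val_inj ij]; first exact: c_proper.
  by rewrite eq_sym; apply: c_proper; rewrite // e_sym.
by move: eij; rewrite ij (negPf (e_irr j)).
Qed.

Section McCormick.
Variables (R : realFieldType) (n : nat) (e : rel 'I_n) (a : 'I_n -> 'I_n -> R).

Lemma conv_Bset_sub_Qset (p : point R n) : conv (Bset e a) p -> Qset e a p.
Proof.
move=> [m [lam [pts [lam_ge0 lam1 ptsB xE zE]]]].
have x01 k i : 0 <= (pts k).1 i <= 1 := (ptsB k).1 i.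
have le_avg (F G : 'I_m -> R) : (forall k, F k <= G k) ->
    \sum_(k < m) lam k * F k <= \sum_(k < m) lam k * G k.
  by move=> FG; apply: ler_sum => k _; apply: ler_wpM2l.
have avg1 : \sum_(k < m) lam k * 1 = 1 by under eq_bigr do rewrite mulr1.
have avg0 : \sum_(k < m) lam k * 0 = 0 by rewrite big1 // => k _; rewrite mulr0.
have p01 : in_box p.1.
  move=> i; rewrite xE -{1}avg0 -avg1; apply/andP; split; apply: le_avg => k;
  by case/andP: (x01 k i).
split=> //; exists (fun i j => \sum_(k < m) lam k * ((pts k).1 i * (pts k).1 j)); split.
  split=> // i j _ _; rewrite !xE.
  have mcc k : [/\ 0 <= (pts k).1 i * (pts k).1 j <= 1,
      (pts k).1 i * (pts k).1 j <= (pts k).1 i, (pts k).1 i * (pts k).1 j <= (pts k).1 j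
      & (pts k).1 i + (pts k).1 j - 1 <= (pts k).1 i * (pts k).1 j].
    case/andP: (x01 k i) => ? ?; case/andP: (x01 k j) => ? ?.
    by split; [apply/andP; split|..]; nra.
  split.
  - rewrite -{1}avg0 -avg1; apply/andP; split; apply: le_avg => k;
    by case: (mcc k) => /andP[].
  - by apply: le_avg => k; case: (mcc k).
  - by apply: le_avg => k; case: (mcc k).
  - rewrite -avg1 -big_split -sumrB /=.
    under eq_bigr => k _ do rewrite -mulrDr -mulrBr.
    by apply: le_avg => k; case: (mcc k).
rewrite zE; under eq_bigr do rewrite (ptsB _).2 /bilin mulr_sumr.
rewrite exchange_big; apply: eq_bigr => i _; under eq_bigr do rewrite mulr_sumr.
rewrite exchange_big; apply: eq_bigr => j _; rewrite mulr_sumr.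
by apply: eq_bigr => k _; ring.
Qed.

Definition half_point : point R n := (fun _ => 2^-1, 0).

Lemma Qset_half_point : Qset e a half_point.
Proof.
have half01 : 0 <= (2^-1 : R) <= 1 by apply/andP; split; lra.
split=> //; exists (fun _ _ => 0); split.
  by split=> // i j _ _ /=; split; rewrite ?lexx ?ler01 //; lra.
by rewrite big1 // => i _; rewrite big1 // => j _; rewrite mulr0.
Qed.

Hypothesis a_gt0 : forall i j : 'I_n, (i < j)%N -> e i j -> 0 < a i j.

Lemma bilin_term_ge0 (x : 'I_n -> R) (i j : 'I_n) :
  in_box x -> (i < j)%N && e i j -> 0 <= a i j * x i * x j.
Proof.
move=> x01 /andP[ij eij]; case/andP: (x01 i) => ? _; case/andP: (x01 j) => ? _.
by rewrite !mulr_ge0 // ltW // a_gt0.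
Qed.

Lemma bilin_ge0 (x : 'I_n -> R) : in_box x -> 0 <= bilin e a x.
Proof.
by move=> x01; rewrite sumr_ge0 // => i _; rewrite sumr_ge0 // => j; apply: bilin_term_ge0.
Qed.

Lemma bilin_eq0 (x : 'I_n -> R) (i j : 'I_n) :
  in_box x -> bilin e a x = 0 -> (i < j)%N -> e i j -> x i * x j = 0.
Proof.
move=> x01 b0 ij eij.
have term_ge0 i' j' := @bilin_term_ge0 x i' j' x01.
have row0 := psumr_eq0P (fun i' _ => sumr_ge0 _ (term_ge0 i')) b0.
have /eqP := psumr_eq0P (term_ge0 i) (row0 i isT) (introT andP (conj ij eij)).
by rewrite -mulrA mulf_eq0 gt_eqF ?a_gt0 // => /eqP.
Qed.

Lemma Qset_sub_conv_Bset (p : point R n) :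
  bipartite e -> Qset e a p -> conv (Bset e a) p.
Proof.
case: p => x z [s s_proper] [x01 [y [[_ y_mcc] /= ->]]] /=.
rewrite /= in x01 y_mcc.
have u01 : in_box (fun i => lit (s i) (x i)).
  by move=> i /=; case/andP: (x01 i) => ? ?; rewrite /lit; case: (s i); apply/andP; split; lra.
apply: (conv_between (zl := env_sum e a s (fun i => lit (s i) (x i)))
                     (zu := env_sum e a (fun _ => true) x)).
- apply: conv_ext (conv_Bset_env e a s u01) _ _ => //= i; exact/esym/litK.
- exact: conv_ext (conv_Bset_env e a (fun=> true) x01) (fun=> erefl) erefl.
- apply/andP; split; apply: ler_sum => i _; apply: ler_sum => j /andP[ij eij];
    rewrite ler_wpM2l ?(ltW (a_gt0 ij eij)) //;
    have [/andP[y0 _] yi yj yij] := y_mcc i j ij eij.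
  + by apply: env_le_mccormick_lower; rewrite ?s_proper.
  + exact: env_ge_mccormick_upper.
Qed.

(* In a representation of the half point, every point of positive weight has
   x_i x_j = 0 and x_i + x_j = 1 on each edge. *)
Lemma bipartite_of_conv_half_point :
  simple_graph e -> conv (Bset e a) half_point -> bipartite e.
Proof.
move=> G [m [lam [pts [lam_ge0 lam1 ptsB xE zE]]]].
have x01 k : in_box (pts k).1 := (ptsB k).1.
have bilin0 : forall k, lam k != 0 -> bilin e a (pts k).1 = 0.
  apply: weighted_sum_eq0 => // [k _|]; first exact: bilin_ge0.
  by rewrite [RHS](zE : 0 = _); apply: eq_bigr => k _; rewrite (ptsB k).2.
have mul0 k (i j : 'I_n) :
    lam k != 0 -> (i < j)%N -> e i j -> (pts k).1 i * (pts k).1 j = 0.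
  by move=> lamk; apply: bilin_eq0 (x01 k) (bilin0 k lamk).
have add1 k (i j : 'I_n) :
    lam k != 0 -> (i < j)%N -> e i j -> (pts k).1 i + (pts k).1 j = 1.
  move=> lamk ij eij; suff : 1 - (pts k).1 i - (pts k).1 j = 0 by lra.
  move: k lamk; apply: (weighted_sum_eq0 (F := fun k => 1 - (pts k).1 i - (pts k).1 j)) => //.
    move=> l laml; have /eqP := mul0 l i j laml ij eij; rewrite mulf_eq0.
    by case/andP: (x01 l i) => ? ?; case/andP: (x01 l j) => ? ? /orP[] /eqP; lra.
  have -> : \sum_(k < m) lam k * (1 - (pts k).1 i - (pts k).1 j) =
      \sum_(k < m) lam k - \sum_(k < m) lam k * (pts k).1 i
        - \sum_(k < m) lam k * (pts k).1 j.
    by rewrite -!sumrB; apply: eq_bigr => k _; ring.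
  by rewrite lam1 -!xE /=; lra.
have [k0 lamk0] : exists k, lam k != 0.
  case: (pickP (fun k => lam k != 0)) => [k lamk|lam0]; first by exists k.
  move: lam1; rewrite big1 => [/eqP|k _]; first by rewrite eq_sym oner_eq0.
  exact/eqP/negbFE/lam0.
apply: (bipartite_of_ltn (c := fun i => (pts k0).1 i == 0)) G _ => i j ij eij.
exact: eq0_xor_of_mul0_add1 (mul0 k0 i j lamk0 ij eij) (add1 k0 i j lamk0 ij eij).
Qed.

End McCormick.

Unset Implicit Arguments.

Theorem mainTheorem10 (R : realFieldType) (n : nat) (e : rel 'I_n)
    (a : 'I_n -> 'I_n -> R) :
  simple_graph e ->
  (forall i j : 'I_n, (i < j)%N -> e i j -> 0 < a i j) ->
  ((forall p : point R n, Qset e a p <-> conv (Bset e a) p) <-> bipartite e).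
Proof.
move=> G a_gt0; split=> [QB | bip p].
  exact/(bipartite_of_conv_half_point a_gt0 G)/QB/Qset_half_point.
by split; [exact: (Qset_sub_conv_Bset a_gt0 bip) | exact: conv_Bset_sub_Qset].
Qed.
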